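(* Let $L\subseteq\Sigma^*$ be a regular language whose syntactic monoid $\mathrm{Syn}(L)$ is a cyclic group. Then $\mathrm{ns}(L)=\mathrm{nsyn}(L)$.
   Context: $\mathrm{Syn}(L)$ is $\Sigma^*$ modulo $v\equiv_L w\iff\forall x,y\,(xvy\in L\Leftrightarrow xwy\in L)$. $\mathrm{ns}(L)$ is the least number of states of an nfa (several initial states allowed) accepting $L$. $\mathrm{nsyn}(L)$ is the least degree $|J(S)|$ (number of join-irreducibles of a finite semilattice $S$) of a boolean representation $\rho\colon\mathrm{Syn}(L)\to\mathbf{JSL}(S,S)$ (a monoid morphism into the join-preserving endomaps of $S$, multiplication $f\cdot g=g\circ f$) which extends the canonical representation $\kappa_L\colon[w]_L\mapsto(K\mapsto w^{-1}K)$ on $\mathrm{LQ}(L)$ (the semilattice of finite unions of left derivatives $u^{-1}L$), where extending means there is an injective join-preserving $f\colon\mathrm{LQ}(L)\to S$ with $f(w^{-1}K)=\rho([w]_L)(f(K))$. Equivalently (by the paper's main theorem), $\mathrm{nsyn}(L)$ is the least number of states of an nfa for $L$ all of whose states accept languages in the boolean algebra generated by the two-sided derivatives $u^{-1}Lv^{-1}$. *)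

From HB Require Import structures.
From mathcomp Require Import all_boot all_order.
Set Implicit Arguments. Unset Strict Implicit. Unset Printing Implicit Defensive.
Import Order.Theory.

Definition lang (Sigma : finType) := seq Sigma -> bool.

Definition lder (Sigma : finType) (u : seq Sigma) (K : lang Sigma) : lang Sigma :=
  fun w => K (u ++ w).

Fixpoint nfa_run (Sigma : finType) n (delta : 'I_n -> Sigma -> {set 'I_n})
    (X : {set 'I_n}) (w : seq Sigma) : {set 'I_n} :=
  match w with
  | [::] => X
  | a :: w' => nfa_run delta (\bigcup_(q in X) delta q a) w'
  end.

Definition nfa_accepts (Sigma : finType) n (delta : 'I_n -> Sigma -> {set 'I_n})
    (I F : {set 'I_n}) (w : seq Sigma) : bool :=
  [exists q in nfa_run delta I w, q \in F].

Definition nfa_with_states (Sigma : finType) (L : lang Sigma) (n : nat) : Prop :=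
  exists (delta : 'I_n -> Sigma -> {set 'I_n}) (I F : {set 'I_n}),
    forall w, nfa_accepts delta I F w = L w.

Definition regular (Sigma : finType) (L : lang Sigma) : Prop :=
  exists (n : nat) (delta : 'I_n -> Sigma -> 'I_n) (q0 : 'I_n) (F : {set 'I_n}),
    forall w, L w = (foldl (fun q a => delta q a) q0 w \in F).

Definition syn_equiv (Sigma : finType) (L : lang Sigma) (v w : seq Sigma) : Prop :=
  forall x y, L (x ++ v ++ y) = L (x ++ w ++ y).

Definition syn_is_group (Sigma : finType) (L : lang Sigma) : Prop :=
  forall u, exists v, syn_equiv L (u ++ v) [::] /\ syn_equiv L (v ++ u) [::].

Definition wpow (Sigma : finType) (g : seq Sigma) (k : nat) : seq Sigma :=
  flatten (nseq k g).

(* Syn(L) is a cyclic group: a group generated by a single class [g]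
   (Syn(L) being finite, its powers g^k, k in nat, exhaust the subgroup). *)
Definition syn_cyclic_group (Sigma : finType) (L : lang Sigma) : Prop :=
  syn_is_group L /\
  exists g : seq Sigma, forall u, exists k, syn_equiv L u (wpow g k).

Definition is_least (P : nat -> Prop) (n : nat) : Prop :=
  P n /\ forall m, P m -> n <= m.

(* LQ(L): finite unions of left derivatives (empty union = empty language) *)
Definition in_LQ (Sigma : finType) (L : lang Sigma) (K : lang Sigma) : Prop :=
  exists s : seq (seq Sigma), K =1 (fun w => has (fun u => L (u ++ w)) s).

Definition lunion (Sigma : finType) (K K' : lang Sigma) : lang Sigma :=
  fun w => K w || K' w.
Definition lempty (Sigma : finType) : lang Sigma := fun _ => false.

Local Open Scope order_scope.

Definition join_pres d (S : finTBLatticeType d) (h : S -> S) : Prop :=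
  h \bot = \bot /\ forall a b : S, h (a `|` b) = h a `|` h b.

Definition join_irr d (S : finTBLatticeType d) (j : S) : bool :=
  (j != \bot) && [forall a : S, forall b : S, (j == a `|` b) ==> ((j == a) || (j == b))].

Definition degree d (S : finTBLatticeType d) : nat := #|[set j : S | join_irr j]|.

(* A monoid morphism rho : Syn(L) -> JSL(S,S) (with f . g = g o f), given on
   representatives: it is constant on syntactic classes. *)
Definition syn_rep (Sigma : finType) (L : lang Sigma) d (S : finTBLatticeType d)
    (rho : seq Sigma -> S -> S) : Prop :=
  [/\ forall v w, syn_equiv L v w -> rho v =1 rho w,
      rho [::] =1 id,
      forall u v, rho (u ++ v) =1 rho v \o rho u
    & forall w, join_pres (rho w)].

(* rho extends the canonical representation kappa_L on LQ(L) via an injective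
   join-preserving f : LQ(L) -> S. *)
Definition extends_canonical (Sigma : finType) (L : lang Sigma) d
    (S : finTBLatticeType d) (rho : seq Sigma -> S -> S) (f : lang Sigma -> S) : Prop :=
  [/\ forall K K', in_LQ L K -> in_LQ L K' -> K =1 K' -> f K = f K',
      forall K K', in_LQ L K -> in_LQ L K' -> f K = f K' -> K =1 K',
      f (@lempty Sigma) = \bot,
      forall K K', in_LQ L K -> in_LQ L K' -> f (lunion K K') = f K `|` f K'
    & forall w K, in_LQ L K -> f (lder w K) = rho w (f K)].

Definition nsyn_with_degree (Sigma : finType) (L : lang Sigma) (n : nat) : Prop :=
  exists (d : Order.disp_t) (S : finTBLatticeType d)
         (rho : seq Sigma -> S -> S) (f : lang Sigma -> S),
    [/\ syn_rep L rho, extends_canonical L rho f & degree S = n].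

(* ns <= nsyn holds for every language: the join-irreducibles of the
   semilattice S of a representation (rho, f) are the states of an nfa, with
   j -a-> j' iff j' <= rho a j, initial states those below f L, and final
   states those not below the largest image f K of an epsilon-free quotient K.

   nsyn <= ns uses the cyclic group.  Fix an nfa with n states and a generator
   g of Syn(L).  Transition maps of the powers of g eventually repeat with a
   period per, and g^per is syntactically trivial.  Letting a word w act on a
   set of states X as the union of the runs from X on g^(shift + i) over the
   exponents i < per of the class of w (shift a large multiple of per) gives
   an action of Syn(L) on sets of states which is compatible with left
   derivatives of the modified state languages.  The closed sets of states
   (those determined by the language they accept) then form a finite lattice
   carrying a representation extending kappa_L, whose join-irreducibles are
   among the closures of the n singletons. *)

From HB Require Import structures.
From mathcomp Require Import all_boot all_order zify boolp.
Set Implicit Arguments. Unset Strict Implicit. Unset Printing Implicit Defensive.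
Import Order.Theory.

Lemma least_exists (P : nat -> Prop) : (exists n, P n) -> exists n, is_least P n.
Proof.
move=> exP; have exPb : exists n, `[< P n >] by case: exP => n Pn; exists n; exact/asboolP.
case: (ex_minnP exPb) => m /asboolP Pm min_m.
by exists m; split => // k Pk; apply: min_m; exact/asboolP.
Qed.

Lemma wpowD (Sigma : finType) (g : seq Sigma) s t :
  wpow g (s + t) = wpow g s ++ wpow g t.
Proof. by rewrite /wpow nseqD flatten_cat. Qed.

Section SyntacticCongruence.
Variables (Sigma : finType) (L : lang Sigma).

Lemma syn_refl v : syn_equiv L v v. Proof. by []. Qed.

Lemma syn_sym v w : syn_equiv L v w -> syn_equiv L w v.
Proof. by move=> h x y; rewrite h. Qed.

Lemma syn_trans v w z : syn_equiv L v w -> syn_equiv L w z -> syn_equiv L v z.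
Proof. by move=> h1 h2 x y; rewrite h1 h2. Qed.

Lemma syn_cat v w v' w' : syn_equiv L v w -> syn_equiv L v' w' ->
  syn_equiv L (v ++ v') (w ++ w').
Proof.
move=> h h' x y.
have -> : x ++ (v ++ v') ++ y = (x ++ v) ++ v' ++ y by rewrite !catA.
by rewrite h' -!catA h.
Qed.

Lemma syn_lang v w : syn_equiv L v w -> L v = L w.
Proof. by move=> h; have := h [::] [::]; rewrite /= !cats0. Qed.

Lemma syn_cancel : syn_is_group L ->
  forall z v w, syn_equiv L (z ++ v) (z ++ w) -> syn_equiv L v w.
Proof.
move=> grp z v w h; have [z' [_ z'z]] := grp z.
have unit u : syn_equiv L (z' ++ (z ++ u)) u by rewrite catA; exact: syn_cat z'z (syn_refl u).
exact: syn_trans (syn_sym (unit v)) (syn_trans (syn_cat (syn_refl z') h) (unit w)).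
Qed.

End SyntacticCongruence.

Section LeftQuotients.
Variables (Sigma : finType) (L : lang Sigma).

Lemma in_LQ_empty : in_LQ L (@lempty Sigma).
Proof. by exists [::]. Qed.

Lemma in_LQ_self : in_LQ L L.
Proof. by exists [:: [::]] => w /=; rewrite orbF. Qed.

Lemma in_LQ_union K K' : in_LQ L K -> in_LQ L K' -> in_LQ L (lunion K K').
Proof. by move=> [s es] [s' es']; exists (s ++ s') => w; rewrite /lunion es es' has_cat. Qed.

Lemma in_LQ_lder w K : in_LQ L K -> in_LQ L (lder w K).
Proof.
move=> [s es]; exists [seq u ++ w | u <- s] => v.
by rewrite /lder es has_map; apply: eq_has => u /=; rewrite catA.
Qed.

End LeftQuotients.

Section NfaRuns.
Variables (Sigma : finType) (n : nat) (delta : 'I_n -> Sigma -> {set 'I_n}).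
Notation run := (nfa_run delta).

Lemma run_cat X u v : run X (u ++ v) = run (run X u) v.
Proof. by elim: u X => //= a u IH X. Qed.

Lemma run_mem w X q' : (q' \in run X w) = [exists q in X, q' \in run [set q] w].
Proof.
elim: w X => [|a w IH] X /=.
  apply/idP/existsP => [h|[q /andP [qX]]]; first by exists q'; rewrite h set11.
  by rewrite inE => /eqP ->.
rewrite IH; apply/existsP/existsP => [[p /andP [/bigcupP [q qX pd] h]]|[q /andP [qX]]].
  exists q; rewrite qX /= IH; apply/existsP; exists p; rewrite h andbT.
  by apply/bigcupP; exists q; rewrite ?set11.
rewrite IH => /existsP [p /andP [/bigcupP [q0]]]; rewrite inE => /eqP -> pd h.
by exists p; rewrite h andbT; apply/bigcupP; exists q.
Qed.

Lemma run_bigcup (J : finType) (P : pred J) (Y : J -> {set 'I_n}) w :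
  run (\bigcup_(i | P i) Y i) w = \bigcup_(i | P i) run (Y i) w.
Proof.
apply/setP => q'; rewrite run_mem.
apply/existsP/bigcupP => [[q /andP [/bigcupP [i Pi qY] h]]|[i Pi]].
  by exists i => //; rewrite run_mem; apply/existsP; exists q; rewrite qY.
rewrite run_mem => /existsP [q /andP [qY h]].
by exists q; rewrite h andbT; apply/bigcupP; exists i.
Qed.

End NfaRuns.

(* A complete dfa is an nfa with a single initial state. *)
Lemma regular_nfa (Sigma : finType) (L : lang Sigma) :
  regular L -> exists n, nfa_with_states L n.
Proof.
case=> n [delta [q0 [F hL]]]; exists n, (fun q a => [set delta q a]), [set q0], F => w.
have run q : nfa_run (fun q a => [set delta q a]) [set q] w
             = [set foldl (fun q a => delta q a) q w].
  by elim: w q => [|a w IH] q //=; rewrite big_set1 IH.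
rewrite hL /nfa_accepts run; apply/existsP/idP => [[x /andP [/set1P -> //]]|h].
by exists (foldl (fun q a => delta q a) q0 w); rewrite set11.
Qed.

Section JoinIrreducibles.
Local Open Scope order_scope.
Variables (d : Order.disp_t) (S : finTBLatticeType d).

Lemma join_bigcup k (X : {set 'I_k}) (A : 'I_k -> {set 'I_k}) (F : 'I_k -> S) :
  \join_(i in \bigcup_(q in X) A q) F i = \join_(q in X) \join_(i in A q) F i.
Proof.
apply/eqP; rewrite eq_le; apply/andP; split.
  by apply/joinsP => i /bigcupP [q qX iA]; apply: (joins_min qX); exact: joins_sup.
apply/joinsP => q qX; apply/joinsP => i iA; apply: joins_sup.
by apply/bigcupP; exists q.
Qed.

Lemma join_irr_big (J : eqType) (r : seq J) (F : J -> S) (j : S) :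
  join_irr j -> j = \join_(x <- r) F x -> exists2 x, x \in r & j = F x.
Proof.
case/andP => jn0 /forallP jirr; elim: r => [|x r IH].
  by rewrite big_nil => e; rewrite e eqxx in jn0.
rewrite big_cons => e.
have /forallP /(_ (\join_(x <- r) F x)) := jirr (F x).
rewrite -e eqxx /= => /orP [/eqP h|/eqP h].
  by exists x; rewrite ?mem_head.
by have [y yr ->] := IH h; exists y; rewrite // in_cons yr orbT.
Qed.

Variables (k : nat) (jv : 'I_k -> S).
Hypothesis jv_surj : forall j, join_irr j -> exists i, j = jv i.

Lemma join_irr_decomp s : \join_(i | jv i <= s) jv i = s.
Proof.
apply/eqP; rewrite eq_le; apply/andP; split; first exact/joinsP.
have below_mono a b : a <= b -> \join_(i | jv i <= a) jv i <= \join_(i | jv i <= b) jv i.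
  by move=> lab; apply/joinsP => i hi; apply: joins_sup; exact: le_trans hi lab.
have [N] := ubnP #|[set y : S | y < s]|; elim: N s => // N IH s hN.
have IHlt a : a < s -> a <= \join_(i | jv i <= s) jv i.
  move=> las; apply: le_trans (below_mono _ _ (ltW las)); apply: IH.
  apply: leq_trans (ltnSE hN); apply: proper_card; apply/properP; split.
    by apply/subsetP => y; rewrite !inE => /lt_trans; apply.
  by exists a; rewrite !inE ?las ?ltxx.
have [->|sn0] := eqVneq s \bot; first exact: le0x.
case ji: (join_irr s).
  by have [i ei] := jv_surj ji; rewrite {1}ei; apply: joins_sup; rewrite -ei.
move/negbT: ji; rewrite /join_irr sn0 /= negb_forall => /existsP [a].
rewrite negb_forall => /existsP [b].
rewrite negb_imply negb_or => /andP [/eqP e /andP [na nb]].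
rewrite {1}e leUx !IHlt //.
  by rewrite lt_neqAle eq_sym nb e leUr.
by rewrite lt_neqAle eq_sym na e leUl.
Qed.

End JoinIrreducibles.

Section RepresentationToNfa.
Local Open Scope order_scope.
Variables (Sigma : finType) (L : lang Sigma) (d : Order.disp_t) (S : finTBLatticeType d)
  (rho : seq Sigma -> S -> S) (f : lang Sigma -> S).
Hypotheses (rho_rep : syn_rep L rho) (f_ext : extends_canonical L rho f).

Lemma eps_free_max : exists2 U, in_LQ L U /\ U [::] = false &
  forall K, in_LQ L K -> K [::] = false -> f K <= f U.
Proof.
case: f_ext => _ _ fbot fjoin _.
suff [U hU maxU] : exists2 U, in_LQ L U /\ U [::] = false &
    forall K, in_LQ L K -> K [::] = false -> f K \in index_enum S -> f K <= f U.
  by exists U => // K hK K0; apply: maxU; rewrite ?mem_index_enum.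
elim: (index_enum S) => [|x r [U [hU U0] maxU]].
  by exists (@lempty Sigma) => //; split; [exact: in_LQ_empty|].
case: (pselect (exists K, [/\ in_LQ L K, K [::] = false & f K = x])) => [[K [hK K0 fKx]]|nx].
  exists (lunion K U); first by split; [exact: in_LQ_union|rewrite /lunion K0 U0].
  move=> K' hK' K'0; rewrite in_cons fjoin // => /orP [/eqP ->|K'r].
    by rewrite -fKx leUl.
  exact: le_trans (maxU _ hK' K'0 K'r) (leUr _ _).
exists U => // K hK K0; rewrite in_cons => /orP [/eqP fKx|]; last exact: maxU.
by case: nx; exists K.
Qed.

Lemma eps_threshold : exists m : S, forall K, in_LQ L K -> (f K <= m) = ~~ K [::].
Proof.
case: (f_ext) => _ finj _ fjoin _.
have [U [hU U0] maxU] := eps_free_max.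
exists (f U) => K hK; apply/idP/idP => [le_KU|/negbTE K0]; last exact: maxU.
have eKU : f (lunion K U) = f U by rewrite fjoin //; exact/join_idPr.
by have := finj _ _ (in_LQ_union hK hU) hU eKU [::]; rewrite /lunion U0 orbF => ->.
Qed.

Variables (k : nat) (jv : 'I_k -> S).
Hypothesis jv_surj : forall j, join_irr j -> exists i, j = jv i.

Definition rep_delta (i : 'I_k) (a : Sigma) : {set 'I_k} :=
  [set i' | jv i' <= rho [:: a] (jv i)].

Lemma rep_run u (X : {set 'I_k}) :
  \join_(i in nfa_run rep_delta X u) jv i = rho u (\join_(i in X) jv i).
Proof.
case: rho_rep => _ rnil rcat rjp.
elim: u X => [|a u IH] X /=; first by rewrite rnil.
rewrite IH (rcat [:: a] u) /= join_bigcup.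
rewrite (big_morph (rho [:: a]) (rjp [:: a]).2 (rjp [:: a]).1); congr (rho u _).
apply: eq_bigr => q _; rewrite -[RHS](join_irr_decomp jv_surj).
by apply: eq_bigl => i; rewrite inE.
Qed.

(* Start below f L and accept when the reached join is not below the
   threshold: by rep_run this joint state is f (w^{-1} L). *)
Lemma rep_nfa : nfa_with_states L k.
Proof.
have [m hm] := eps_threshold; case: f_ext => _ _ _ _ fder.
exists rep_delta, [set i | jv i <= f L], [set i | ~~ (jv i <= m)] => w.
have -> : L w = ~~ ~~ lder w L [::] by rewrite /lder cats0 negbK.
have jL : \join_(i in [set i | jv i <= f L]) jv i = f L.
  by rewrite -[RHS](join_irr_decomp jv_surj); apply: eq_bigl => i; rewrite inE.
rewrite -(hm (lder w L)); last exact: in_LQ_lder (in_LQ_self L).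
rewrite fder; last exact: in_LQ_self.
rewrite -[in RHS]jL -rep_run.
apply/idP/idP => [/existsP [q /andP [qX]]|].
  by rewrite inE => nq; apply/negP => /joinsP /(_ q qX); rewrite (negbTE nq).
apply: contraR => /existsPn hq; apply/joinsP => i iX.
by move: (hq i); rewrite iX inE negbK.
Qed.

End RepresentationToNfa.

Lemma nsyn_to_nfa (Sigma : finType) (L : lang Sigma) e :
  nsyn_with_degree L e -> nfa_with_states L e.
Proof.
move=> [d [S [rho [f [rho_rep f_ext <-]]]]].
apply: (rep_nfa rho_rep f_ext (jv := fun i => enum_val i)) => j ji.
have jJ : j \in [set j : S | join_irr j] by rewrite inE.
by exists (enum_rank_in jJ j); rewrite enum_rankK_in.
Qed.

Section ClosedSets.
Variables (Sigma : finType) (n : nat) (lq : 'I_n -> lang Sigma).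

Definition set_lang (X : {set 'I_n}) : lang Sigma := fun u => [exists q in X, lq q u].

Definition clo (X : {set 'I_n}) : {set 'I_n} :=
  [set q | `[< forall u, lq q u -> set_lang X u >]].

Lemma set_lang_sub (X Y : {set 'I_n}) u : X \subset Y -> set_lang X u -> set_lang Y u.
Proof.
move=> /subsetP sXY /existsP [q /andP [qX h]].
by apply/existsP; exists q; rewrite sXY.
Qed.

Lemma set_langU (X Y : {set 'I_n}) u : set_lang (X :|: Y) u = set_lang X u || set_lang Y u.
Proof.
apply/existsP/orP => [[q /andP []]|[] /existsP [q /andP [qX h]]].
- by rewrite inE => /orP [] qX h; [left|right]; apply/existsP; exists q; rewrite qX.
- by exists q; rewrite inE qX.
- by exists q; rewrite inE qX orbT.
Qed.

Lemma set_lang0 u : set_lang set0 u = false.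
Proof. by apply/existsP => [[q]]; rewrite inE. Qed.

Lemma subclo (X : {set 'I_n}) : X \subset clo X.
Proof.
apply/subsetP => q qX; rewrite inE; apply/asboolP => u h.
by apply/existsP; exists q; rewrite qX.
Qed.

Lemma set_lang_clo (X : {set 'I_n}) : set_lang (clo X) =1 set_lang X.
Proof.
move=> u; apply/idP/idP; last exact: set_lang_sub (subclo X).
by case/existsP => q /andP []; rewrite inE => /asboolP h /h.
Qed.

Lemma clo_eq (X Y : {set 'I_n}) : set_lang X =1 set_lang Y -> clo X = clo Y.
Proof.
by move=> e; apply/setP => q; rewrite !inE; apply/asboolP/asboolP => h u /h; rewrite e.
Qed.

Lemma cloK (X : {set 'I_n}) : clo (clo X) = clo X.
Proof. exact/clo_eq/set_lang_clo. Qed.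

Lemma clo_min (X Z : {set 'I_n}) : clo Z = Z -> X \subset Z -> clo X \subset Z.
Proof.
move=> cZ sXZ; apply/subsetP => q; rewrite inE => /asboolP h.
by rewrite -cZ inE; apply/asboolP => u /h; exact: set_lang_sub.
Qed.

Definition closed_set := {X : {set 'I_n} | clo X == X}.
HB.instance Definition _ := Finite.on closed_set.

Lemma closedP (X : closed_set) : clo (val X) = val X.
Proof. exact/eqP/(valP X). Qed.

Definition mk_closed (X : {set 'I_n}) : closed_set :=
  exist (fun Z => clo Z == Z) (clo X) (introT eqP (cloK X)).

Definition closed_le (X Y : closed_set) := val X \subset val Y.

Lemma closed_le_refl : reflexive closed_le.
Proof. by move=> X; exact: subxx. Qed.

Lemma closed_le_anti : antisymmetric closed_le.
Proof. by move=> X Y /andP [h1 h2]; apply/val_inj/eqP; rewrite eqEsubset; exact/andP. Qed.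

Lemma closed_le_trans : transitive closed_le.
Proof. by move=> X Y Z; exact: subset_trans. Qed.

Fact closed_disp : Order.disp_t. Proof. exact: Order.Disp tt tt. Qed.

HB.instance Definition _ :=
  Order.Le_isPOrder.Build closed_disp closed_set closed_le_refl closed_le_anti closed_le_trans.

Lemma closedI (X Y : closed_set) : clo (val X :&: val Y) == val X :&: val Y.
Proof.
by rewrite eqEsubset subclo andbT subsetI !clo_min ?closedP ?subsetIl ?subsetIr.
Qed.

Definition closed_meet (X Y : closed_set) : closed_set :=
  exist (fun Z => clo Z == Z) _ (closedI X Y).
Definition closed_join (X Y : closed_set) : closed_set := mk_closed (val X :|: val Y).

Lemma closed_meetP (X Y Z : closed_set) :
  (X <= closed_meet Y Z)%O = (X <= Y)%O && (X <= Z)%O.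
Proof. by rewrite /Order.le /= /closed_le /= subsetI. Qed.

Lemma closed_joinP (X Y Z : closed_set) :
  (closed_join X Y <= Z)%O = (X <= Z)%O && (Y <= Z)%O.
Proof.
rewrite /Order.le /= /closed_le /= -subUset; apply/idP/idP.
  exact: subset_trans (subclo _).
exact: clo_min (closedP Z).
Qed.

HB.instance Definition _ :=
  Order.POrder_MeetJoin_isLattice.Build closed_disp closed_set closed_meetP closed_joinP.

Lemma closed_le0 (X : closed_set) : (mk_closed set0 <= X)%O.
Proof. by rewrite /Order.le /= /closed_le /= clo_min ?closedP ?sub0set. Qed.

HB.instance Definition _ := Order.hasBottom.Build closed_disp closed_set closed_le0.

Lemma closedT : clo setT == setT.
Proof. by rewrite eqEsubset subsetT subclo. Qed.

Lemma closed_le1 (X : closed_set) : (X <= exist (fun Z => clo Z == Z) _ closedT)%O.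
Proof. by rewrite /Order.le /= /closed_le /= subsetT. Qed.

HB.instance Definition _ := Order.hasTop.Build closed_disp closed_set closed_le1.

Lemma closed_ext (X Y : closed_set) : set_lang (val X) =1 set_lang (val Y) -> X = Y.
Proof. by move=> e; apply: val_inj; rewrite -(closedP X) -(closedP Y); exact: clo_eq. Qed.

Lemma set_lang_join (X Y : closed_set) u :
  set_lang (val (X `|` Y)%O) u = set_lang (val X) u || set_lang (val Y) u.
Proof. by rewrite (set_lang_clo (val X :|: val Y)) set_langU. Qed.

Lemma set_lang_bot u : set_lang (val (\bot : closed_set)%O) u = false.
Proof. by rewrite (set_lang_clo set0) set_lang0. Qed.

(* Every closed set is the join of the closures of its points, so the
   join-irreducibles are among the n closed singletons. *)
Lemma closed_joins (X : closed_set) : X = (\join_(q <- enum (val X)) mk_closed [set q])%O.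
Proof.
apply/eqP; rewrite eq_le; apply/andP; split.
  apply/subsetP => q qX.
  have : (mk_closed [set q] <= \join_(q <- enum (val X)) mk_closed [set q])%O.
    by apply: (joins_sup_seq (P := predT) (fun q => mk_closed [set q])); rewrite ?mem_enum.
  by move/subsetP; apply; apply: (subsetP (subclo _)); exact: set11.
apply/joinsP_seq => q; rewrite mem_enum => qX _.
by rewrite /Order.le /= /closed_le /= clo_min ?closedP // sub1set.
Qed.

Lemma degree_closed : degree closed_set <= n.
Proof.
have sub : [set j : closed_set | join_irr j] \subset (fun q => mk_closed [set q]) @: [set: 'I_n].
  apply/subsetP => j; rewrite inE => ji.
  by have [q _ ->] := join_irr_big ji (closed_joins j); exact: imset_f.
apply: leq_trans (subset_leq_card sub) _.
by apply: leq_trans (leq_imset_card _ _) _; rewrite cardsT card_ord.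
Qed.

Variables (L : lang Sigma) (act : seq Sigma -> {set 'I_n} -> {set 'I_n}).
Hypothesis act_lder : forall w X u, set_lang (act w X) u = set_lang X (w ++ u).
Hypothesis act_syn : forall v w X, syn_equiv L v w -> act v X = act w X.
Hypothesis LQ_set_lang : forall K, in_LQ L K -> exists X, K =1 set_lang X.

Definition closed_rho (w : seq Sigma) (X : closed_set) : closed_set := mk_closed (act w (val X)).

Definition closed_of (K : lang Sigma) : closed_set :=
  mk_closed [set q | `[< forall u, lq q u -> K u >]].

Lemma set_lang_rho w X u : set_lang (val (closed_rho w X)) u = set_lang (val X) (w ++ u).
Proof. by rewrite set_lang_clo act_lder. Qed.

Lemma set_lang_closed_of K : in_LQ L K -> set_lang (val (closed_of K)) =1 K.
Proof.
move=> /LQ_set_lang [X eK] u; rewrite set_lang_clo; apply/existsP/idP.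
  by case=> q /andP []; rewrite inE => /asboolP h /h.
rewrite eK => /existsP [q /andP [qX h]]; exists q; rewrite h andbT inE.
by apply/asboolP => v hv; rewrite eK; apply/existsP; exists q; rewrite qX.
Qed.

Lemma closed_rep : exists2 e, e <= n & nsyn_with_degree L e.
Proof.
exists (degree closed_set); first exact: degree_closed.
exists closed_disp, closed_set, closed_rho, closed_of; split => //; split.
- by move=> v w h X; rewrite /closed_rho (act_syn _ h).
- by move=> X; apply: closed_ext => u; rewrite set_lang_rho.
- move=> u v X; apply: closed_ext => x.
  by rewrite set_lang_rho /= set_lang_clo act_lder set_lang_clo act_lder catA.
- split; first by apply: closed_ext => u; rewrite set_lang_rho !set_lang_bot.
  by move=> a b; apply: closed_ext => u; rewrite set_lang_rho !set_lang_join !set_lang_rho.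
- by move=> K K' hK hK' e; apply: closed_ext => u; rewrite !set_lang_closed_of.
- by move=> K K' hK hK' e u; rewrite -(set_lang_closed_of hK) -(set_lang_closed_of hK') e.
- apply: closed_ext => u.
  by rewrite set_lang_bot set_lang_closed_of //; exact: in_LQ_empty.
- move=> K K' hK hK'; apply: closed_ext => u.
  by rewrite set_lang_join !set_lang_closed_of //; exact: in_LQ_union.
- move=> w K hK; apply: closed_ext => u.
  by rewrite set_lang_rho !set_lang_closed_of //; exact: in_LQ_lder.
Qed.

End ClosedSets.

Section CyclicAction.
Variables (Sigma : finType) (L : lang Sigma) (n : nat)
  (delta : 'I_n -> Sigma -> {set 'I_n}) (I F : {set 'I_n}).
Hypothesis accepts_L : forall w, nfa_accepts delta I F w = L w.
Hypothesis syn_grp : syn_is_group L.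
Variable g : seq Sigma.
Hypothesis g_gen : forall u, exists k, syn_equiv L u (wpow g k).
Notation run := (nfa_run delta).

Definition pow_map t : {ffun 'I_n -> {set 'I_n}} := [ffun q => run [set q] (wpow g t)].

(* By the pigeonhole principle the transition maps of the powers of g repeat. *)
Lemma pow_map_repeats : exists st : nat * nat, (st.1 < st.2) && (pow_map st.1 == pow_map st.2).
Proof.
pose N := #|{ffun 'I_n -> {set 'I_n}}|.
have /injectivePn [i [j ij e]] : ~~ injectiveb (fun i : 'I_N.+1 => pow_map i).
  by apply/negP => /injectiveP inj; have := leq_card _ inj; rewrite card_ord ltnn.
case: (ltngtP i j) => [lt|lt|eij]; last by move: ij; rewrite (val_inj eij) eqxx.
  by exists (nat_of_ord i, nat_of_ord j); rewrite /= lt e eqxx.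
by exists (nat_of_ord j, nat_of_ord i); rewrite /= lt e eqxx.
Qed.

Definition pre := (xchoose pow_map_repeats).1.
Definition per := (xchoose pow_map_repeats).2 - pre.

Lemma per_gt0 : 0 < per.
Proof. by case/andP: (xchooseP pow_map_repeats); rewrite subn_gt0. Qed.

Lemma pow_map_per : pow_map (pre + per) = pow_map pre.
Proof.
by case/andP: (xchooseP pow_map_repeats) => lt /eqP e; rewrite /per subnKC ?(ltnW lt).
Qed.

Lemma run_pow_map X s t : pow_map s = pow_map t -> run X (wpow g s) = run X (wpow g t).
Proof.
move=> e; apply/setP => q'; rewrite !run_mem; apply: eq_existsb => q.
by have := congr1 (fun M : {ffun _ -> _} => M q) e; rewrite !ffunE => ->.
Qed.

Lemma run_periodic c t X : pre <= t -> run X (wpow g (t + c * per)) = run X (wpow g t).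
Proof.
move=> le_pre_t; elim: c => [|c IH]; first by rewrite addn0.
have -> : t + c.+1 * per = (pre + per) + (t - pre + c * per) by rewrite mulSn; lia.
rewrite wpowD run_cat (run_pow_map _ pow_map_per) -run_cat -wpowD.
by have -> : pre + (t - pre + c * per) = t + c * per by lia.
Qed.

(* Since Syn(L) is a group, g^per is syntactically trivial. *)
Lemma syn_pow_per : syn_equiv L (wpow g per) [::].
Proof.
apply: (syn_cancel syn_grp (z := wpow g pre)); rewrite cats0 -wpowD => x y.
by rewrite -!accepts_L /nfa_accepts !run_cat (run_pow_map _ pow_map_per).
Qed.

Lemma syn_pow_mod t : syn_equiv L (wpow g t) (wpow g (t %% per)).
Proof.
rewrite {1}(divn_eq t per) wpowD.
elim: (t %/ per) => [|c IH]; first by rewrite mul0n.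
rewrite mulSn wpowD -catA; apply: syn_trans IH.
exact: syn_cat syn_pow_per (syn_refl _ _).
Qed.

Definition is_exp (w : seq Sigma) (i : 'I_per) : bool := `[< syn_equiv L (wpow g i) w >].

Lemma is_exp_exists w : exists i, is_exp w i.
Proof.
have [j hj] := g_gen w.
exists (Ordinal (ltn_pmod j per_gt0)); apply/asboolP.
exact: syn_sym (syn_trans hj (syn_pow_mod j)).
Qed.

Lemma is_exp_cat w u (k : 'I_per) :
  is_exp (w ++ u) k <-> exists i i' : 'I_per, [/\ is_exp w i, is_exp u i' & (i + i') %% per = k].
Proof.
split=> [/asboolP hk|[i [i' [/asboolP hi /asboolP hi' e]]]]; last first.
  apply/asboolP; rewrite -e; apply: syn_trans (syn_sym (syn_pow_mod _)) _.
  by rewrite wpowD; exact: syn_cat.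
have [i /asboolP hi] := is_exp_exists w.
pose i' := Ordinal (ltn_pmod (k + per - i) per_gt0).
have e : (i + i') %% per = k.
  rewrite /= modnDmr.
  have -> : i + (k + per - i) = k + per by have := ltn_ord i; lia.
  by rewrite modnDr modn_small.
exists i, i'; split => //; first exact/asboolP.
apply/asboolP; apply: (syn_cancel syn_grp (z := wpow g i)); rewrite -wpowD.
apply: syn_trans (syn_pow_mod (i + i')) _; rewrite e.
exact: syn_trans hk (syn_cat (syn_sym hi) (syn_refl _ _)).
Qed.

(* Shifting exponents by a multiple of per beyond pre makes runs periodic. *)
Definition shift := pre * per.

Lemma run_shift_add X (i j : nat) :
  run (run X (wpow g (shift + i))) (wpow g (shift + j))
  = run X (wpow g (shift + (i + j) %% per)).
Proof.
rewrite -run_cat -wpowD; have hp := per_gt0; have hd := divn_eq (i + j) per.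
have -> : shift + i + (shift + j) = shift + (i + j) %% per + (pre + (i + j) %/ per) * per.
  by rewrite /shift; lia.
by rewrite run_periodic // /shift; nia.
Qed.

Definition act (w : seq Sigma) (X : {set 'I_n}) : {set 'I_n} :=
  \bigcup_(i | is_exp w i) run X (wpow g (shift + i)).

Lemma act_syn v w X : syn_equiv L v w -> act v X = act w X.
Proof.
move=> h; apply: eq_bigl => i; apply/asboolP/asboolP => hi.
  exact: syn_trans hi h.
exact: syn_trans hi (syn_sym h).
Qed.

Lemma act_cat w u X : act u (act w X) = act (w ++ u) X.
Proof.
apply/setP => q; rewrite /act; apply/bigcupP/bigcupP.
  case=> i' exp_i'; rewrite run_bigcup => /bigcupP [i exp_i].
  rewrite run_shift_add => h; exists (Ordinal (ltn_pmod (i + i') per_gt0)) => //.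
  by apply/is_exp_cat; exists i, i'.
case=> k /is_exp_cat [i [i' [exp_i exp_i' e]]] h; exists i' => //.
by rewrite run_bigcup; apply/bigcupP; exists i; rewrite // run_shift_add e.
Qed.

Definition acc (X : {set 'I_n}) (u : seq Sigma) : bool := [exists q in act u X, q \in F].

Lemma act_mem u X q' : (q' \in act u X) = [exists q in X, q' \in act u [set q]].
Proof.
apply/bigcupP/existsP => [[i exp_i]|[q /andP [qX /bigcupP [i exp_i h]]]].
  rewrite run_mem => /existsP [q /andP [qX h]]; exists q; rewrite qX /=.
  by apply/bigcupP; exists i.
by exists i => //; rewrite run_mem; apply/existsP; exists q; rewrite qX.
Qed.

Lemma acc_decomp X u : acc X u = [exists q in X, acc [set q] u].
Proof.
apply/existsP/existsP => [[q' /andP [h q'F]]|[q /andP [qX /existsP [q' /andP [h q'F]]]]].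
  move: h; rewrite act_mem => /existsP [q /andP [qX h]].
  by exists q; rewrite qX; apply/existsP; exists q'; rewrite h.
by exists q'; rewrite q'F andbT act_mem; apply/existsP; exists q; rewrite qX.
Qed.

Lemma acc_init u : acc I u = L u.
Proof.
have [i exp_i] := is_exp_exists u; move/asboolP: (exp_i) => hi.
have L_shift (j : 'I_per) : is_exp u j -> L (wpow g (shift + j)) = L u.
  move=> /asboolP hj; rewrite -(syn_lang hj) (syn_lang (syn_pow_mod _)).
  by rewrite /shift modnMDl -(syn_lang (syn_pow_mod _)).
apply/existsP/idP => [[q /andP [/bigcupP [j exp_j h] qF]]|Lu].
  by rewrite -(L_shift j exp_j) -accepts_L; apply/existsP; exists q; rewrite h.
move: Lu; rewrite -(L_shift i exp_i) -accepts_L => /existsP [q /andP [h qF]].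
by exists q; rewrite qF andbT; apply/bigcupP; exists i.
Qed.

End CyclicAction.

Lemma cyclic_rep (Sigma : finType) (L : lang Sigma) n
    (delta : 'I_n -> Sigma -> {set 'I_n}) (I F : {set 'I_n}) :
  (forall w, nfa_accepts delta I F w = L w) -> syn_cyclic_group L ->
  exists2 e, e <= n & nsyn_with_degree L e.
Proof.
move=> accepts_L [grp [g g_gen]].
pose lq q := acc L delta F g [set q].
have set_lang_acc X : set_lang lq X =1 acc L delta F g X.
  by move=> u; rewrite /set_lang acc_decomp.
apply: (closed_rep (lq := lq) (act := act L delta g)).
- by move=> w X u; rewrite !set_lang_acc /acc (act_cat accepts_L grp g_gen).
- by move=> v w X; exact: act_syn.
- move=> K [s es]; exists (\bigcup_(u <- s) act L delta g u I) => w.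
  rewrite es set_lang_acc; elim: s {es} => [|u s IH] /=.
    by rewrite big_nil -set_lang_acc set_lang0.
  rewrite big_cons -set_lang_acc set_langU !set_lang_acc IH.
  by rewrite /acc (act_cat accepts_L grp g_gen) -/(acc L delta F g I (u ++ w)) acc_init.
Qed.

Theorem theorem5p2 (Sigma : finType) (L : lang Sigma) :
  regular L -> syn_cyclic_group L ->
  exists n, is_least (nfa_with_states L) n /\ is_least (nsyn_with_degree L) n.
Proof.
move=> reg cyc.
have [m [nfa_m min_m]] := least_exists (regular_nfa reg).
have [delta [I [F accepts_L]]] := nfa_m.
have [e le_em rep_e] := cyclic_rep accepts_L cyc.
have e_m : e = m by apply/eqP; rewrite eqn_leq le_em min_m //; exact: nsyn_to_nfa.
exists m; split; split => //; first by rewrite -e_m.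
by move=> k /nsyn_to_nfa; exact: min_m.
Qed.
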